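(* Let $(X,d,\kappa)$ be a digital metric space with $1<|X|<\infty$, and let $T:X\to X$ be a weakly uniformly strict digital contraction. Then $T$ is neither one-to-one nor onto.
   Context: A digital metric space is a triple $(X,d,\kappa)$ where $X\subset\mathbb{Z}^n$ for some positive integer $n$, $\kappa$ is an adjacency relation on $X$, and $d$ is a metric on $X$. $T:X\to X$ is a weakly uniformly strict digital contraction if for every $\varepsilon>0$ there exists $\delta>0$ such that for all $x,y\in X$, $\varepsilon\le d(x,y)<\varepsilon+\delta$ implies $d(T(x),T(y))<\varepsilon$. *)

(* points of Z^n are row vectors 'rV[int]_n, a finite digital
   image X is a finite set {fset 'rV[int]_n} (finmap), metric values in a realType. *)
From HB Require Import structures.
From mathcomp Require Import all_boot all_order all_algebra.
From mathcomp Require Import finmap.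
From mathcomp Require Import reals.
Set Implicit Arguments. Unset Strict Implicit. Unset Printing Implicit Defensive.
Import Order.TTheory GRing.Theory Num.Theory.
Local Open Scope ring_scope.

Definition is_metric (R : realType) (P : Type) (d : P -> P -> R) : Prop :=
  (forall x y, 0 <= d x y) /\
  (forall x y, d x y = 0 <-> x = y) /\
  (forall x y, d x y = d y x) /\
  (forall x y z, d x z <= d x y + d y z).

Definition wus_digital_contraction (R : realType) (P : Type)
    (d : P -> P -> R) (T : P -> P) : Prop :=
  forall eps : R, 0 < eps ->
    exists delta : R, 0 < delta /\
      forall x y : P, eps <= d x y -> d x y < eps + delta -> d (T x) (T y) < eps.

From HB Require Import structures.
From mathcomp Require Import all_boot all_order all_algebra.
From mathcomp Require Import finmap.
From mathcomp Require Import reals.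
Set Implicit Arguments. Unset Strict Implicit. Unset Printing Implicit Defensive.
Import Order.TTheory GRing.Theory Num.Theory.
Local Open Scope ring_scope.
Local Open Scope fset_scope.

(* Taking [eps := d x y] in the definition shows that a weakly uniformly
   strict contraction strictly decreases every positive distance.  In a finite
   space a pair of distinct points at minimal distance then has images that
   cannot be distinct, so [T] is not injective; and a surjective self-map of a
   finite set is injective, so [T] is not onto either. *)

Lemma wus_digital_contraction_lt (R : realType) (P : Type)
    (d : P -> P -> R) (T : P -> P) (x y : P) :
  wus_digital_contraction d T -> 0 < d x y -> d (T x) (T y) < d x y.
Proof.
move=> wusT dxy_gt0; have [delta [delta_gt0 shrinkT]] := wusT _ dxy_gt0.
by apply: shrinkT => //; rewrite ltrDl.
Qed.

Lemma metric_gt0 (R : realType) (P : Type) (d : P -> P -> R) (x y : P) :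
  is_metric d -> x <> y -> 0 < d x y.
Proof.
move=> [d_ge0 [d_eq0 _]] xy; rewrite lt_def d_ge0 andbT.
by apply/eqP => /d_eq0.
Qed.

Lemma shrinking_not_injective (T : finType) disp (R : orderType disp)
    (d : T -> T -> R) (f : T -> T) :
  (1 < #|T|)%N -> (forall x y, x != y -> (d (f x) (f y) < d x y)%O) ->
  ~ injective f.
Proof.
move=> /card_gt1P[x0 [y0 [_ _ xy0]]] shrink f_inj.
have [[x y] /= xy dmin] :=
  @arg_minP _ R _ (x0, y0) (fun p => p.1 != p.2) (fun p => d p.1 p.2) xy0.
have fxy : f x != f y by apply: contra xy => /eqP /f_inj ->.
by have := dmin (f x, f y) fxy; rewrite leNgt shrink.
Qed.

Lemma surj_injective (T : finType) (f : T -> T) :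
  (forall y, exists x, f x = y) -> injective f.
Proof.
move=> f_surj x y; apply: (image_injP _ x y) => //.
rewrite eqn_leq leq_image_card /=.
apply/subset_leq_card/subsetP => z _.
by have [w <-] := f_surj z; apply: image_f.
Qed.

Theorem proposition8p4 (R : realType) (n : nat) (X : {fset 'rV[int]_n})
    (kappa : X -> X -> bool) (d : X -> X -> R) (T : X -> X) :
  (0 < n)%N ->
  is_metric d ->
  (1 < #|` X|)%N ->
  wus_digital_contraction d T ->
  ~ injective T /\ ~ (forall y : X, exists x : X, T x = y).
Proof.
move=> _ d_metric X_gt1 wusT.
have shrinkT (x y : X) : x != y -> d (T x) (T y) < d x y.
  by move/eqP/(metric_gt0 d_metric)/(wus_digital_contraction_lt wusT).
have T_not_inj : ~ injective T.
  by apply: (shrinking_not_injective _ shrinkT); rewrite -cardfE.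
by split=> // /surj_injective.
Qed.
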